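(* For any time warps $f,g,h$: (a) $f\backslash(g\wedge h)=(f\backslash g)\wedge(f\backslash h)$; (b) $(g\wedge h)\backslash f=(g\backslash f)\vee(h\backslash f)$; (c) $f\backslash(g\vee h)=(f\backslash g)\vee(f\backslash h)$; (d) $(g\vee h)\backslash f=(g\backslash f)\wedge(h\backslash f)$; (e) $(g\wedge h)/f=(g/f)\wedge(h/f)$; (f) $f/(g\wedge h)=(f/g)\vee(f/h)$; (g) $(g\vee h)/f=(g/f)\vee(h/f)$; (h) $f/(g\vee h)=(f/g)\wedge(f/h)$.
   Context: Let $\overline{\omega}=\omega\cup\{\omega\}$ be the natural numbers with a top element $\omega$ adjoined, with its natural total order. A time warp is a monotone map $f\colon\overline{\omega}\to\overline{\omega}$ with $f(0)=0$ and $f(\omega)=\bigvee\{f(n)\mid n\in\omega\}$. The set $W$ of time warps is ordered pointwise, with $\wedge,\vee$ the pointwise meet and join, and $fg:=f\circ g$. The residuals $\backslash,/$ are the binary operations on $W$ satisfying, for all $f,g,h\in W$: $f\le h/g \iff fg\le h \iff g\le f\backslash h$. *)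

From Stdlib Require Import Arith Lia Classical.

Inductive nbar : Type := Fin (n : nat) | Om.

Definition nle (x y : nbar) : Prop :=
  match x, y with
  | _, Om => True
  | Om, Fin _ => False
  | Fin a, Fin b => a <= b
  end.

Definition nmin (x y : nbar) : nbar :=
  match x, y with
  | Om, y => y
  | x, Om => x
  | Fin a, Fin b => Fin (Nat.min a b)
  end.

Definition nmax (x y : nbar) : nbar :=
  match x, y with
  | Om, _ => Om
  | _, Om => Om
  | Fin a, Fin b => Fin (Nat.max a b)
  end.

Definition is_sup (u : nat -> nbar) (v : nbar) : Prop :=
  (forall n, nle (u n) v) /\ (forall w, (forall n, nle (u n) w) -> nle v w).

Record warp : Type := Warp {
  wfun :> nbar -> nbar;
  wmono : forall x y, nle x y -> nle (wfun x) (wfun y);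
  wzero : wfun (Fin 0) = Fin 0;
  wsup : is_sup (fun n => wfun (Fin n)) (wfun Om)
}.

Definition wle (f g : warp) : Prop := forall x, nle (f x) (g x).

Definition comp_le (f g h : warp) : Prop := forall x, nle (f (g x)) (h x).

Lemma nle_total x y : nle x y \/ nle y x.
Proof. destruct x, y; simpl; auto; lia. Qed.

Lemma nle_trans x y z : nle x y -> nle y z -> nle x z.
Proof. destruct x, y, z; simpl; auto; try lia; tauto. Qed.

Lemma nle_min x y z : nle z x -> nle z y -> nle z (nmin x y).
Proof. destruct x, y, z; simpl; auto; lia. Qed.

Lemma nmin_l x y : nle (nmin x y) x.
Proof. destruct x, y; simpl; auto; lia. Qed.
Lemma nmin_r x y : nle (nmin x y) y.
Proof. destruct x, y; simpl; auto; lia. Qed.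
Lemma nmax_l x y : nle x (nmax x y).
Proof. destruct x, y; simpl; auto; lia. Qed.
Lemma nmax_r x y : nle y (nmax x y).
Proof. destruct x, y; simpl; auto; lia. Qed.
Lemma nmax_le x y z : nle x z -> nle y z -> nle (nmax x y) z.
Proof. destruct x, y, z; simpl; auto; lia. Qed.

Lemma nle_mono_min a b c d : nle a b -> nle c d -> nle (nmin a c) (nmin b d).
Proof. intros. apply nle_min. eapply nle_trans; [apply nmin_l|]; auto.
  eapply nle_trans; [apply nmin_r|]; auto. Qed.
Lemma nle_mono_max a b c d : nle a b -> nle c d -> nle (nmax a c) (nmax b d).
Proof. intros. apply nmax_le. eapply nle_trans; [|apply nmax_l]; auto.
  eapply nle_trans; [|apply nmax_r]; auto. Qed.

Lemma warp_exceed (f : warp) w : ~ nle (f Om) w -> exists n, ~ nle (f (Fin n)) w.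
Proof.
  intros H. apply NNPP; intro Hn. apply H. apply (proj2 (wsup f)).
  intro n. apply NNPP. intro Hc. apply Hn. eauto.
Qed.

Lemma nle_not x y : ~ nle x y -> nle y x.
Proof. intros H. destruct (nle_total x y); tauto. Qed.

Definition wmeet (f g : warp) : warp.
Proof.
  refine (@Warp (fun x => nmin (f x) (g x)) _ _ _).
  - intros x y Hxy. apply nle_mono_min; apply wmono; auto.
  - rewrite !wzero. reflexivity.
  - split.
    + intro n. apply nle_mono_min; apply wmono; exact I.
    + intros w Hw. apply NNPP. intro Hc.
      assert (H1 : ~ nle (f Om) w).
      { intro H; apply Hc. eapply nle_trans; [apply nmin_l|]; auto. }
      assert (H2 : ~ nle (g Om) w).
      { intro H; apply Hc. eapply nle_trans; [apply nmin_r|]; auto. }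
      destruct (warp_exceed f w H1) as [n1 Hn1].
      destruct (warp_exceed g w H2) as [n2 Hn2].
      pose (m := Nat.max n1 n2).
      assert (A : nle (f (Fin n1)) (f (Fin m))) by (apply wmono; simpl; lia).
      assert (B : nle (g (Fin n2)) (g (Fin m))) by (apply wmono; simpl; lia).
      specialize (Hw m). simpl in Hw.
      destruct (nle_total (f (Fin m)) (g (Fin m))) as [C|C].
      * apply Hn1. eapply nle_trans; [exact A|]. eapply nle_trans; [|exact Hw].
        apply nle_min; auto. destruct (f (Fin m)); simpl; auto; lia.
      * apply Hn2. eapply nle_trans; [exact B|]. eapply nle_trans; [|exact Hw].
        apply nle_min; auto. destruct (g (Fin m)); simpl; auto; lia.
Defined.

Definition wjoin (f g : warp) : warp.
Proof.
  refine (@Warp (fun x => nmax (f x) (g x)) _ _ _).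
  - intros x y Hxy. apply nle_mono_max; apply wmono; auto.
  - rewrite !wzero. reflexivity.
  - split.
    + intro n. apply nle_mono_max; apply wmono; exact I.
    + intros w Hw. apply nmax_le.
      * apply (proj2 (wsup f)). intro n. eapply nle_trans; [apply nmax_l|]. apply Hw.
      * apply (proj2 (wsup g)). intro n. eapply nle_trans; [apply nmax_r|]. apply Hw.
Defined.

(* The residuals, specified by the defining Galois property:
   f <= h / g  <->  f g <= h  <->  g <= f \ h *)
Definition is_ldiv (ldiv : warp -> warp -> warp) : Prop :=
  forall f g h : warp, wle g (ldiv f h) <-> comp_le f g h.
Definition is_rdiv (rdiv : warp -> warp -> warp) : Prop :=
  forall f g h : warp, wle f (rdiv h g) <-> comp_le f g h.

(* At a positive finite point n, f \ h takes the largest value y with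
   f y <= h n, and h / g the largest value below every h z with g z >= n;
   both follow from the Galois property tested against the least warp that
   jumps to y at n.  Each identity then becomes a statement about these
   pointwise descriptions, and the nontrivial ones, (b), (c), (f) and (g),
   use only that the order of omega-bar is total. *)

From Stdlib Require Import Arith Lia Classical Setoid FunctionalExtensionality ProofIrrelevance.

Section TotalOrder.
Variables (T : Type) (le : T -> T -> Prop).
Hypothesis le_total : forall x y, le x y \/ le y x.

Lemma forall_imp_or (P A B : T -> Prop) :
  (forall x y, le x y -> A x -> A y) -> (forall x y, le x y -> B x -> B y) ->
  (forall z, P z -> A z \/ B z) ->
  (forall z, P z -> A z) \/ (forall z, P z -> B z).
Proof.
  intros monoA monoB HAB.
  apply NNPP; intros [notA notB]%not_or_and.
  apply not_all_ex_not in notA as [z1 [P1 A1]%imply_to_and].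
  apply not_all_ex_not in notB as [z2 [P2 B2]%imply_to_and].
  destruct (le_total z1 z2) as [le12|le21].
  - destruct (HAB z1 P1) as [A1'|B1]; [tauto|eauto].
  - destruct (HAB z2 P2) as [A2|B2']; [eauto|tauto].
Qed.

Lemma forall_and_imp_or (P Q R : T -> Prop) :
  (forall x y, le x y -> P x -> P y) -> (forall x y, le x y -> Q x -> Q y) ->
  (forall z, P z /\ Q z -> R z) ->
  (forall z, P z -> R z) \/ (forall z, Q z -> R z).
Proof.
  intros monoP monoQ HPQ.
  apply NNPP; intros [notP notQ]%not_or_and.
  apply not_all_ex_not in notP as [z1 [P1 R1]%imply_to_and].
  apply not_all_ex_not in notQ as [z2 [Q2 R2]%imply_to_and].
  destruct (le_total z1 z2) as [le12|le21].
  - apply R2, HPQ; eauto.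
  - apply R1, HPQ; eauto.
Qed.

End TotalOrder.

Lemma nle_refl x : nle x x.
Proof. destruct x; simpl; auto. Qed.

Lemma nle_antisym x y : nle x y -> nle y x -> x = y.
Proof. destruct x, y; simpl; intros; try tauto; f_equal; lia. Qed.

Lemma nle0 x : nle (Fin 0) x.
Proof. destruct x; simpl; auto; lia. Qed.

Lemma nle_ext a b : (forall y, nle y a <-> nle y b) -> a = b.
Proof. intros H; apply nle_antisym; apply H, nle_refl. Qed.

Lemma nle_min_iff x y z : nle z (nmin x y) <-> nle z x /\ nle z y.
Proof. destruct x, y, z; simpl; intuition lia. Qed.

Lemma nmin_le_iff x y z : nle (nmin x y) z <-> nle x z \/ nle y z.
Proof. destruct x, y, z; simpl; intuition lia. Qed.

Lemma nle_max_iff x y z : nle z (nmax x y) <-> nle z x \/ nle z y.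
Proof. destruct x, y, z; simpl; intuition lia. Qed.

Lemma nmax_le_iff x y z : nle (nmax x y) z <-> nle x z /\ nle y z.
Proof. destruct x, y, z; simpl; intuition lia. Qed.

Lemma wmeetE g h x : wmeet g h x = nmin (g x) (h x).
Proof. reflexivity. Qed.

Lemma wjoinE g h x : wjoin g h x = nmax (g x) (h x).
Proof. reflexivity. Qed.

Lemma warp_ext (f g : warp) : (forall x, f x = g x) -> f = g.
Proof.
  destruct f as [f fm fz fs], g as [g gm gz gs]; simpl; intro H.
  assert (f = g) by (apply functional_extensionality; auto). subst g.
  f_equal; apply proof_irrelevance.
Qed.

Lemma warp_eq_pos (f g : warp) :
  (forall n y, nle y (f (Fin (S n))) <-> nle y (g (Fin (S n)))) -> f = g.
Proof.
  intros H.
  assert (Hfin : forall m, f (Fin m) = g (Fin m)).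
  { intros [|m]; [now rewrite !wzero | apply nle_ext, H]. }
  apply warp_ext; intros [m|]; [apply Hfin|].
  destruct (wsup f) as [f_ub f_lub], (wsup g) as [g_ub g_lub].
  apply nle_antisym; [apply f_lub | apply g_lub]; intro m;
    [rewrite Hfin; apply g_ub | rewrite <- Hfin; apply f_ub].
Qed.

Definition stepf (n : nat) (y z : nbar) : nbar :=
  match z with
  | Fin m => if m <=? n then Fin 0 else y
  | Om => y
  end.

Lemma stepf_spec n y z :
  (nle (Fin (S n)) z /\ stepf n y z = y) \/ (~ nle (Fin (S n)) z /\ stepf n y z = Fin 0).
Proof.
  destruct z as [m|]; simpl; [|auto].
  destruct (Nat.leb_spec m n); [right|left]; split; auto; lia.
Qed.

Lemma stepf_at n y : stepf n y (Fin (S n)) = y.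
Proof. unfold stepf. now rewrite (proj2 (Nat.leb_gt _ _)) by lia. Qed.

Lemma stepf_mono n y z z' : nle z z' -> nle (stepf n y z) (stepf n y z').
Proof.
  intros Hz.
  destruct (stepf_spec n y z) as [[Hn ->]|[_ ->]]; [|apply nle0].
  destruct (stepf_spec n y z') as [[_ ->]|[Hn' _]]; [apply nle_refl|].
  exfalso; eauto using nle_trans.
Qed.

Definition step (n : nat) (y : nbar) : warp.
Proof.
  refine (@Warp (stepf n y) (stepf_mono n y) eq_refl _).
  split.
  - intro m; apply stepf_mono; exact I.
  - intros w Hw. rewrite <- (stepf_at n y). apply Hw.
Defined.

Lemma step_le_iff n y (k : warp) : wle (step n y) k <-> nle y (k (Fin (S n))).
Proof.
  split.
  - intros Hk. rewrite <- (stepf_at n y). exact (Hk (Fin (S n))).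
  - intros Hy z. simpl.
    destruct (stepf_spec n y z) as [[Hz ->]|[_ ->]]; [|apply nle0].
    eapply nle_trans; [exact Hy|]. now apply wmono.
Qed.

Section Residuals.
Variables ldiv rdiv : warp -> warp -> warp.
Hypotheses (Hl : is_ldiv ldiv) (Hr : is_rdiv rdiv).

Lemma ldiv_pos f h n y :
  nle y (ldiv f h (Fin (S n))) <-> nle (f y) (h (Fin (S n))).
Proof.
  rewrite <- step_le_iff, (Hl f). split.
  - intros Hcomp. rewrite <- (stepf_at n y). exact (Hcomp (Fin (S n))).
  - intros Hy z. simpl.
    destruct (stepf_spec n y z) as [[Hz ->]|[_ ->]]; [|rewrite wzero; apply nle0].
    eapply nle_trans; [exact Hy|]. now apply wmono.
Qed.

Lemma rdiv_pos h g n y :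
  nle y (rdiv h g (Fin (S n))) <-> forall z, nle (Fin (S n)) (g z) -> nle y (h z).
Proof.
  rewrite <- step_le_iff, (Hr (step n y)). split.
  - intros Hcomp z Hz. specialize (Hcomp z). simpl in Hcomp.
    destruct (stepf_spec n y (g z)) as [[_ E]|[Hn _]]; [congruence | tauto].
  - intros Hy z. simpl.
    destruct (stepf_spec n y (g z)) as [[Hz ->]|[_ ->]]; [auto | apply nle0].
Qed.

Lemma ldiv_meetr f g h : ldiv f (wmeet g h) = wmeet (ldiv f g) (ldiv f h).
Proof.
  apply warp_eq_pos; intros n y.
  now rewrite wmeetE, nle_min_iff, !ldiv_pos, wmeetE, nle_min_iff.
Qed.

Lemma ldiv_meetl f g h : ldiv (wmeet g h) f = wjoin (ldiv g f) (ldiv h f).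
Proof.
  apply warp_eq_pos; intros n y.
  now rewrite wjoinE, nle_max_iff, !ldiv_pos, wmeetE, nmin_le_iff.
Qed.

Lemma ldiv_joinr f g h : ldiv f (wjoin g h) = wjoin (ldiv f g) (ldiv f h).
Proof.
  apply warp_eq_pos; intros n y.
  now rewrite wjoinE, nle_max_iff, !ldiv_pos, wjoinE, nle_max_iff.
Qed.

Lemma ldiv_joinl f g h : ldiv (wjoin g h) f = wmeet (ldiv g f) (ldiv h f).
Proof.
  apply warp_eq_pos; intros n y.
  now rewrite wmeetE, nle_min_iff, !ldiv_pos, wjoinE, nmax_le_iff.
Qed.

Lemma rdiv_meetl f g h : rdiv (wmeet g h) f = wmeet (rdiv g f) (rdiv h f).
Proof.
  apply warp_eq_pos; intros n y.
  rewrite wmeetE, nle_min_iff, !rdiv_pos.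
  setoid_rewrite wmeetE; setoid_rewrite nle_min_iff; firstorder.
Qed.

Lemma rdiv_meetr f g h : rdiv f (wmeet g h) = wjoin (rdiv f g) (rdiv f h).
Proof.
  apply warp_eq_pos; intros n y.
  rewrite wjoinE, nle_max_iff, !rdiv_pos.
  setoid_rewrite wmeetE; setoid_rewrite nle_min_iff.
  split; [|firstorder].
  apply forall_and_imp_or with (le := nle); [apply nle_total | ..];
    intros; eauto using nle_trans, wmono.
Qed.

Lemma rdiv_joinl f g h : rdiv (wjoin g h) f = wjoin (rdiv g f) (rdiv h f).
Proof.
  apply warp_eq_pos; intros n y.
  rewrite wjoinE, nle_max_iff, !rdiv_pos.
  setoid_rewrite wjoinE; setoid_rewrite nle_max_iff.
  split; [|firstorder].
  apply forall_imp_or with (le := nle); [apply nle_total | ..];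
    intros; eauto using nle_trans, wmono.
Qed.

Lemma rdiv_joinr f g h : rdiv f (wjoin g h) = wmeet (rdiv f g) (rdiv f h).
Proof.
  apply warp_eq_pos; intros n y.
  rewrite wmeetE, nle_min_iff, !rdiv_pos.
  setoid_rewrite wjoinE; setoid_rewrite nle_max_iff; firstorder.
Qed.

End Residuals.

Theorem lemma2p2 (ldiv rdiv : warp -> warp -> warp)
  (Hl : is_ldiv ldiv) (Hr : is_rdiv rdiv) (f g h : warp) :
  ldiv f (wmeet g h) = wmeet (ldiv f g) (ldiv f h) /\
  ldiv (wmeet g h) f = wjoin (ldiv g f) (ldiv h f) /\
  ldiv f (wjoin g h) = wjoin (ldiv f g) (ldiv f h) /\
  ldiv (wjoin g h) f = wmeet (ldiv g f) (ldiv h f) /\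
  rdiv (wmeet g h) f = wmeet (rdiv g f) (rdiv h f) /\
  rdiv f (wmeet g h) = wjoin (rdiv f g) (rdiv f h) /\
  rdiv (wjoin g h) f = wjoin (rdiv g f) (rdiv h f) /\
  rdiv f (wjoin g h) = wmeet (rdiv f g) (rdiv f h).
Proof.
  repeat split.
  - now apply ldiv_meetr.
  - now apply ldiv_meetl.
  - now apply ldiv_joinr.
  - now apply ldiv_joinl.
  - now apply rdiv_meetl.
  - now apply rdiv_meetr.
  - now apply rdiv_joinl.
  - now apply rdiv_joinr.
Qed.
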